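(* Let $c,d>0$, $r\in(0,1)$ and $m\in\mathbb{Z}$. Then for every $x\in\mathbb{C}\setminus[-d,c]$, $$\lim_{p\to\infty}\frac{\hat P_{p+m}(x;0,0,c,d;r^{1/p})}{\hat P_p(x;0,0,c,d;r^{1/p})}=\big(cdr(1-r)\big)^{m/2}\rho^m\!\left(\frac{x-r(c-d)}{2\sqrt{rcd(1-r)}}\right),$$ where $\rho(y)=y+\sqrt{y^2-1}$ with the branch of the square root chosen so that $|\rho(y)|>1$ for $y\notin[-1,1]$.
   Context: For base $q\in(0,1)$, the monic polynomials $\hat P_n(x;0,0,c,d;q)$ are defined by $\hat P_{-1}=0$, $\hat P_0=1$, $x\hat P_n=\hat P_{n+1}+q^n(c-d)\hat P_n+q^{n-1}cd(1-q^n)\hat P_{n-1}$. *)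

From Stdlib Require Import Reals ZArith.
From Coquelicot Require Import Coquelicot.
Open Scope R_scope.

(* Pair (P_{n-1}, P_n) for the monic polynomials \hat P_n(x;0,0,c,d;q):
   P_{-1} = 0, P_0 = 1,
   P_{n+1} = (x - q^n (c-d)) P_n - q^(n-1) c d (1-q^n) P_{n-1}. *)
Fixpoint Phat_pair (c d q : R) (x : C) (n : nat) : C * C :=
  match n with
  | O => (RtoC 0, RtoC 1)
  | S k =>
      let (pm, pk) := Phat_pair c d q x k in
      (pk, Cminus (Cmult (Cminus x (RtoC (q ^ k * (c - d)))) pk)
                  (Cmult (RtoC (q ^ (k - 1) * c * d * (1 - q ^ k))) pm))
  end.

Definition Phat (c d q : R) (x : C) (n : nat) : C := snd (Phat_pair c d q x n).

Definition Cpowz (w : C) (m : Z) : C :=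
  match m with
  | Z0 => RtoC 1
  | Zpos k => Cpow w (Pos.to_nat k)
  | Zneg k => Cinv (Cpow w (Pos.to_nat k))
  end.

(* \hat P_{p+m} for integer m (only meaningful, and only used, for p + m >= 0) *)
Definition Phat_shift (c d q : R) (x : C) (p : nat) (m : Z) : C :=
  Phat c d q x (Z.to_nat (Z.of_nat p + m)).

From Stdlib Require Import Reals ZArith Lra Lia Psatz.
From Coquelicot Require Import Coquelicot.
Open Scope R_scope.

(* The ratios R_n = P_n / P_(n-1) obey R_(n+1) = a_n - b_n / R_n, a Moebius map.  With
   q = r^(1/p) and n within bounded distance of p, q^n -> r, so a_n -> A = x - r (c - d) and
   b_n -> B = r c d (1 - r): near n = p the ratios follow an asymptotically autonomous
   iteration of T v = A - B / v, whose fixed points w+- = sqrt B (y +- s) satisfy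
   |w-| < |w+|.  In the coordinate (v - w+) / (v - w-), T is multiplication by w- / w+, so
   an orbit staying away from the repelling point w- is attracted to w+.  It does stay away:
   for non-real x, Im R_n keeps the sign of Im x while Im w- has the opposite sign; for real
   x outside [-d, c], R_n stays beyond a_n / 2 once q is close to 1.  Hence R_(p+j) -> w+
   for each fixed j, and P_(p+m) / P_p, a product of |m| ratios or their inverses, tends
   to w+^m. *)

Lemma Cmod_sub_pos_neq (u v : C) : 0 < Cmod (u - v) -> u <> v.
Proof.
  intros H E. subst v. replace (u - u)%C with (RtoC 0) in H by ring. rewrite Cmod_0 in H. lra.
Qed.

Lemma Cmod_pos_neq0 (u : C) : 0 < Cmod u -> u <> 0.
Proof. intros H E. rewrite E, Cmod_0 in H. lra. Qed.

Lemma Cmod_sub_le_add (u v w : C) : Cmod (u - w) <= Cmod (u - v) + Cmod (v - w).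
Proof.
  replace (u - w)%C with ((u - v) + (v - w))%C by ring. apply Cmod_triangle.
Qed.

Lemma Im_le_Cmod (z : C) : Rabs (Im z) <= Cmod z.
Proof. eapply Rle_trans; [apply Rmax_r| apply Rmax_Cmod]. Qed.

Lemma Re_sub_RtoC (x : C) (t : R) : Re (Cminus x (RtoC t)) = Re x - t.
Proof. unfold Re. simpl. ring. Qed.

Lemma Im_sub_RtoC (x : C) (t : R) : Im (Cminus x (RtoC t)) = Im x.
Proof. unfold Im. simpl. ring. Qed.

Lemma Rabs_le_of_sqr_le_mul (t y : R) : t ^ 2 <= t * y -> Rabs t <= Rabs y.
Proof.
  intros H. pose proof (Rabs_pos t). pose proof (Rabs_pos y).
  assert (Rabs t ^ 2 <= Rabs t * Rabs y).
  { rewrite pow2_abs, <- Rabs_mult. eapply Rle_trans; [exact H| apply Rle_abs]. }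
  nra.
Qed.

Lemma Rdiv_nonneg (a b : R) : 0 <= a -> 0 <= b -> 0 <= a / b.
Proof.
  intros Ha Hb. destruct (Req_dec b 0) as [E|E].
  - rewrite E. unfold Rdiv. rewrite Rinv_0. lra.
  - apply Rle_mult_inv_pos; lra.
Qed.

Lemma Rdiv_plus_1_mul_le (a E : R) : 0 <= a -> 0 <= E -> a / (E + 1) * E <= a.
Proof.
  intros Ha HE. apply Rmult_le_reg_r with (E + 1); [lra|].
  replace (a / (E + 1) * E * (E + 1)) with (a * E) by (field; lra). nra.
Qed.

Lemma pow_unit_interval q k : 0 <= q <= 1 -> 0 <= q ^ k <= 1.
Proof.
  intros Hq. split; [apply pow_le; lra|]. rewrite <- (pow1 k). apply pow_incr. lra.
Qed.

Lemma one_sub_pow_le q k : 0 <= q <= 1 -> 1 - q ^ k <= INR k * (1 - q).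
Proof.
  intros Hq. induction k as [|k IH]; [simpl; lra|].
  rewrite S_INR. simpl. pose proof (pow_unit_interval q k Hq). nra.
Qed.

Lemma ln_neg r : 0 < r < 1 -> ln r < 0.
Proof. intros Hr. rewrite <- ln_1. apply ln_increasing; lra. Qed.

Lemma INR_inv_pos (p : nat) : (1 <= p)%nat -> 0 < / INR p.
Proof. intros Hp. apply Rinv_0_lt_compat, lt_0_INR. lia. Qed.

Lemma contraction_iterate (z : nat -> R) (lam delta : R) (N : nat) :
  0 <= lam < 1 -> 0 <= delta ->
  (forall i, (i < N)%nat -> z (S i) <= lam * z i + delta) ->
  z N <= lam ^ N * z O + delta / (1 - lam).
Proof.
  intros Hlam Hdelta Hstep.
  assert (Hall : forall i, (i <= N)%nat -> z i <= lam ^ i * z O + delta / (1 - lam)).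
  { induction i as [|i IH]; intros Hi.
    - assert (0 <= delta / (1 - lam)) by (apply Rdiv_le_0_compat; lra). simpl; lra.
    - specialize (IH ltac:(lia)). specialize (Hstep i ltac:(lia)).
      apply (Rmult_le_compat_l lam) in IH; [|lra].
      replace (lam ^ S i * z O + delta / (1 - lam))
        with (lam * (lam ^ i * z O + delta / (1 - lam)) + delta) by (simpl; field; lra).
      lra. }
  apply Hall; lia.
Qed.

Lemma Cpowz_mult (a b : C) (m : Z) : a <> 0 -> b <> 0 ->
  (Cpowz a m * Cpowz b m)%C = Cpowz (a * b) m.
Proof.
  intros Ha Hb. destruct m as [|k|k]; simpl; rewrite ?Cpow_mult_l; [ring| ring|].
  pose proof (Cpow_nz a (Pos.to_nat k) Ha). pose proof (Cpow_nz b (Pos.to_nat k) Hb).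
  field. auto.
Qed.

(* Coquelicot's [locally] on [C] comes from the max-norm uniform structure, whereas
   [filterlim_mult] lives on the [Cmod]-based [AbsRing] structure; the two filters agree
   but are not convertible, so limits are computed in the latter and transferred at the end. *)
Notation Clocally := (@locally (AbsRing_UniformSpace C_AbsRing)).

Lemma filterlim_Clocally_Cmod {T : Type} {F : (T -> Prop) -> Prop} {FF : Filter F}
  (u : T -> C) (l : C) :
  (forall eps, 0 < eps -> F (fun t => Cmod (u t - l) < eps)) -> filterlim u F (Clocally l).
Proof.
  intros H. apply (proj2 (@filterlim_locally _ (AbsRing_UniformSpace C_AbsRing) _ _ u l)).
  intros eps. apply (H eps (cond_pos eps)).
Qed.

Lemma filterlim_Clocally_locally {T : Type} {F : (T -> Prop) -> Prop} {FF : Filter F}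
  (u : T -> C) (l : C) : filterlim u F (Clocally l) -> filterlim u F (locally l).
Proof.
  intros H. apply filterlim_locally. intros eps.
  apply (filter_imp (fun t => Cmod (u t - l) < eps)).
  - intros t Ht. apply C_NormedModule_mixin_compat1. exact Ht.
  - apply (proj1 (@filterlim_locally _ (AbsRing_UniformSpace C_AbsRing) _ _ u l) H eps).
Qed.

Lemma filterlim_seq_ext_loc (u v : nat -> C) (l : C) :
  (exists N, forall n, (N <= n)%nat -> u n = v n) ->
  filterlim u eventually (Clocally l) -> filterlim v eventually (Clocally l).
Proof. intros Heq Hu. exact (filterlim_ext_loc u v Heq Hu). Qed.

Lemma filterlim_seq_const (l : C) : filterlim (fun _ : nat => l) eventually (Clocally l).
Proof. exact (@filterlim_const nat (AbsRing_UniformSpace C_AbsRing) eventually _ l). Qed.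

Lemma filterlim_Cmult {T : Type} {F : (T -> Prop) -> Prop} {FF : Filter F}
  (u v : T -> C) (a b : C) :
  filterlim u F (Clocally a) -> filterlim v F (Clocally b) ->
  filterlim (fun t => (u t * v t)%C) F (Clocally (a * b)%C).
Proof. intros Hu Hv. exact (filterlim_comp_2 _ _ _ Hu Hv (filterlim_mult a b)). Qed.

Lemma Cmod_Cinv_sub_le (z a : C) : a <> 0 -> Cmod a / 2 <= Cmod z ->
  Cmod (/ z - / a) <= 2 * Cmod (z - a) / (Cmod a * Cmod a).
Proof.
  intros Ha Hz. pose proof (Cmod_gt_0 a) as [Ha' _]. specialize (Ha' Ha).
  assert (Hz0 : z <> 0) by (apply Cmod_pos_neq0; lra).
  replace (/ z - / a)%C with (- ((z - a) / (z * a)))%C by (field; auto).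
  rewrite Cmod_opp, Cmod_div, Cmod_mult by (apply Cmult_neq_0; auto).
  replace (2 * Cmod (z - a) / (Cmod a * Cmod a)) with (Cmod (z - a) / (Cmod a / 2 * Cmod a))
    by (field; lra).
  unfold Rdiv. apply Rmult_le_compat_l; [apply Cmod_ge_0|].
  apply Rinv_le_contravar; [nra|]. apply Rmult_le_compat_r; lra.
Qed.

Lemma continuous_Cinv (a : C) : a <> 0 -> filterlim Cinv (Clocally a) (Clocally (/ a)%C).
Proof.
  intros Ha. apply filterlim_Clocally_Cmod. intros eps Heps.
  pose proof (Cmod_gt_0 a) as [Ha' _]. specialize (Ha' Ha).
  set (delta := Rmin (Cmod a / 2) (eps * (Cmod a * Cmod a) / 4)).
  assert (Hdelta : 0 < delta).
  { apply Rmin_glb_lt; [lra|]. apply Rdiv_lt_0_compat; [|lra].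
    apply Rmult_lt_0_compat; nra. }
  exists (mkposreal delta Hdelta). intros z Hz. change (Cmod (z - a) < delta) in Hz.
  assert (Hd1 : delta <= Cmod a / 2) by apply Rmin_l.
  assert (Hd2 : delta <= eps * (Cmod a * Cmod a) / 4) by apply Rmin_r.
  assert (Hza : Cmod a / 2 <= Cmod z).
  { assert (Cmod a <= Cmod (z - a) + Cmod z).
    { replace a with (- (z - a) + z)%C at 1 by ring.
      rewrite <- (Cmod_opp (z - a)). apply Cmod_triangle. }
    lra. }
  eapply Rle_lt_trans; [apply Cmod_Cinv_sub_le; auto|].
  apply Rmult_lt_reg_r with (Cmod a * Cmod a); [nra|].
  replace (2 * Cmod (z - a) / (Cmod a * Cmod a) * (Cmod a * Cmod a)) with (2 * Cmod (z - a))
    by (field; lra).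
  lra.
Qed.

Definition mobius (A B v : C) : C := (A - B / v)%C.

Definition cross_ratio (wp wm v : C) : C := ((v - wp) / (v - wm))%C.

Lemma mobius_perturb (a A b B v : C) : v <> 0 ->
  Cmod (mobius a b v - mobius A B v) <= Cmod (a - A) + Cmod (b - B) / Cmod v.
Proof.
  intros Hv. unfold mobius.
  replace (a - b / v - (A - B / v))%C with ((a - A) + - ((b - B) / v))%C by (field; auto).
  eapply Rle_trans; [apply Cmod_triangle|]. rewrite Cmod_opp, Cmod_div by auto. lra.
Qed.

Lemma Re_mobius (a v : C) (b : R) :
  Re (mobius a b v) = Re a - b * Re v / (Re v ^ 2 + Im v ^ 2).
Proof. unfold mobius, Re, Im. simpl. unfold Rdiv. ring. Qed.

Lemma Im_mobius (a v : C) (b : R) :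
  Im (mobius a b v) = Im a + b * Im v / (Re v ^ 2 + Im v ^ 2).
Proof. unfold mobius, Re, Im. simpl. unfold Rdiv. ring. Qed.

Definition eventually_on_windows (Q : nat -> nat -> Prop) : Prop :=
  forall L : nat, exists P : nat, forall p n : nat,
    (P <= p)%nat -> (p <= n + L)%nat -> (n <= p + L)%nat -> Q p n.

Section Mobius.
Variables (A B wp wm : C).
Hypotheses (Hsum : (wp + wm)%C = A) (Hprod : (wp * wm)%C = B)
  (Hmod : Cmod wm < Cmod wp).

Lemma wp_neq0 : wp <> 0.
Proof. intro E. rewrite E, Cmod_0 in Hmod. pose proof (Cmod_ge_0 wm). lra. Qed.

Lemma wp_neq_wm : wp <> wm.
Proof. intro E. rewrite E in Hmod. lra. Qed.

Lemma cross_ratio_mobius (v : C) : v <> 0 -> v <> wm -> mobius A B v <> wm ->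
  cross_ratio wp wm (mobius A B v) = (wm / wp * cross_ratio wp wm v)%C.
Proof.
  intros Hv0 Hv Hm. pose proof wp_neq0 as Hwp.
  apply Cminus_eq_contra in Hv, Hm.
  unfold cross_ratio, mobius in *. subst A B.
  assert (Hm' : ((wp + wm) * v - wp * wm - wm * v)%C <> 0).
  { intro E. apply Hm.
    replace ((wp + wm) - wp * wm / v - wm)%C with (((wp + wm) * v - wp * wm - wm * v) / v)%C
      by (field; auto).
    rewrite E. field; auto. }
  field. repeat split; auto.
Qed.

Lemma Cmod_cross_ratio_sub (u v : C) : u <> wm -> v <> wm ->
  Cmod (cross_ratio wp wm v - cross_ratio wp wm u) =
  Cmod (wp - wm) * Cmod (v - u) / (Cmod (v - wm) * Cmod (u - wm)).
Proof.
  intros Hu Hv. apply Cminus_eq_contra in Hu, Hv. unfold cross_ratio.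
  replace ((v - wp) / (v - wm) - (u - wp) / (u - wm))%C
    with ((wp - wm) * (v - u) / ((v - wm) * (u - wm)))%C by (field; auto).
  rewrite Cmod_div by (apply Cmult_neq_0; auto). rewrite !Cmod_mult. reflexivity.
Qed.

Lemma Cmod_cross_ratio_le (eta : R) (v : C) : 0 < eta -> eta <= Cmod (v - wm) ->
  Cmod (cross_ratio wp wm v) <= 1 + Cmod (wp - wm) / eta.
Proof.
  intros Heta Hv. assert (Hv0 : (v - wm)%C <> 0) by (apply Cmod_pos_neq0; lra).
  unfold cross_ratio.
  replace ((v - wp) / (v - wm))%C with (1 - (wp - wm) / (v - wm))%C by (field; auto).
  eapply Rle_trans; [apply Cmod_triangle|].
  rewrite Cmod_opp, Cmod_1, Cmod_div by auto.
  apply Rplus_le_compat_l, Rmult_le_compat_l; [apply Cmod_ge_0|].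
  apply Rinv_le_contravar; auto.
Qed.

Lemma dist_le_cross_ratio (v : C) : v <> wm -> Cmod (cross_ratio wp wm v) <= 1 / 2 ->
  Cmod (v - wp) <= 2 * Cmod (wp - wm) * Cmod (cross_ratio wp wm v).
Proof.
  intros Hv Hz. apply Cminus_eq_contra in Hv.
  assert (Hmul : Cmod (v - wp) = Cmod (cross_ratio wp wm v) * Cmod (v - wm)).
  { rewrite <- Cmod_mult. unfold cross_ratio. f_equal. field. auto. }
  pose proof (Cmod_sub_le_add v wp wm).
  pose proof (Cmod_ge_0 (v - wp)). pose proof (Cmod_ge_0 (cross_ratio wp wm v)).
  nra.
Qed.

Lemma cross_ratio_step (eta : R) (v v' : C) : 0 < eta -> v <> 0 ->
  eta <= Cmod (v - wm) -> eta <= Cmod (v' - wm) -> Cmod (v' - mobius A B v) <= eta / 2 ->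
  Cmod (cross_ratio wp wm v') <=
  Cmod wm / Cmod wp * Cmod (cross_ratio wp wm v)
  + 2 * Cmod (wp - wm) / (eta * eta) * Cmod (v' - mobius A B v).
Proof.
  intros Heta Hv0 Hv Hv' Hclose. set (u := mobius A B v) in *.
  assert (Hu : eta / 2 <= Cmod (u - wm)).
  { pose proof (Cmod_sub_le_add v' u wm).
    lra. }
  assert (Hum : u <> wm) by (apply Cmod_sub_pos_neq; lra).
  assert (Hvm : v <> wm) by (apply Cmod_sub_pos_neq; lra).
  assert (Hvm' : v' <> wm) by (apply Cmod_sub_pos_neq; lra).
  assert (Hcu : Cmod (cross_ratio wp wm u) = Cmod wm / Cmod wp * Cmod (cross_ratio wp wm v)).
  { unfold u. rewrite cross_ratio_mobius, Cmod_mult, Cmod_div by (auto; apply wp_neq0).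
    reflexivity. }
  assert (Hlip : Cmod (cross_ratio wp wm v' - cross_ratio wp wm u)
                 <= 2 * Cmod (wp - wm) / (eta * eta) * Cmod (v' - u)).
  { rewrite Cmod_cross_ratio_sub by auto.
    apply Rle_trans with (Cmod (wp - wm) * Cmod (v' - u) / (eta * (eta / 2))).
    - apply Rmult_le_compat_l.
      + apply Rmult_le_pos; apply Cmod_ge_0.
      + apply Rinv_le_contravar; [nra|]. apply Rmult_le_compat; lra.
    - right. field. lra. }
  replace (cross_ratio wp wm v')
    with (cross_ratio wp wm u + (cross_ratio wp wm v' - cross_ratio wp wm u))%C by ring.
  pose proof (Cmod_triangle (cross_ratio wp wm u) (cross_ratio wp wm v' - cross_ratio wp wm u)).
  lra.
Qed.

Lemma root_ratio_lt_1 : 0 <= Cmod wm / Cmod wp < 1.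
Proof.
  pose proof (Cmod_ge_0 wm). split.
  - apply Rdiv_le_0_compat; lra.
  - apply Rmult_lt_reg_r with (Cmod wp); [lra|].
    unfold Rdiv. rewrite Rmult_assoc, Rinv_l; lra.
Qed.

Section Orbit.
Variables (G : nat -> nat -> C) (eta : R).
Hypotheses (Heta : 0 < eta)
  (Haway : eventually_on_windows (fun p n => eta <= Cmod (G p n - wm) /\ G p n <> 0))
  (Hpert : forall e, 0 < e ->
     eventually_on_windows (fun p n => Cmod (G p (S n) - mobius A B (G p n)) < e)).

(* Run [N] contraction steps from index [n - N], where only the a priori bound
   [Cmod_cross_ratio_le] is known; all indices involved lie in the wider window [L + N]. *)
Lemma cross_ratio_window_bound (dm : R) (N : nat) : 0 < dm <= eta / 2 ->
  eventually_on_windows (fun p n =>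
    Cmod (cross_ratio wp wm (G p n)) <=
    (Cmod wm / Cmod wp) ^ N * (1 + Cmod (wp - wm) / eta)
    + 2 * Cmod (wp - wm) / (eta * eta) * dm / (1 - Cmod wm / Cmod wp)).
Proof.
  intros Hdm L. pose proof root_ratio_lt_1 as Hlam.
  set (lam := Cmod wm / Cmod wp) in *. set (K := 2 * Cmod (wp - wm) / (eta * eta)).
  assert (HK : 0 <= K)
    by (apply Rdiv_le_0_compat; [pose proof (Cmod_ge_0 (wp - wm)); lra| nra]).
  destruct (Haway (L + N)%nat) as [P1 HP1].
  destruct (Hpert dm ltac:(lra) (L + N)%nat) as [P2 HP2].
  exists (Nat.max (Nat.max P1 P2) (L + N)). intros p n Hp Hn1 Hn2.
  set (z i := Cmod (cross_ratio wp wm (G p (n - N + i)%nat))).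
  replace n with (n - N + N)%nat at 1 by lia. fold (z N).
  apply Rle_trans with (lam ^ N * z O + K * dm / (1 - lam)).
  - apply contraction_iterate; [lra| nra |]. intros i Hi. unfold z.
    replace (n - N + S i)%nat with (S (n - N + i)) by lia.
    destruct (HP1 p (n - N + i)%nat ltac:(lia) ltac:(lia) ltac:(lia)) as [Ha Hnz].
    destruct (HP1 p (S (n - N + i)) ltac:(lia) ltac:(lia) ltac:(lia)) as [Hb _].
    specialize (HP2 p (n - N + i)%nat ltac:(lia) ltac:(lia) ltac:(lia)).
    eapply Rle_trans; [apply (cross_ratio_step eta (G p (n - N + i)%nat)); auto; lra|].
    apply Rplus_le_compat_l, Rmult_le_compat_l; lra.
  - destruct (HP1 p (n - N + 0)%nat ltac:(lia) ltac:(lia) ltac:(lia)) as [Ha _].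
    pose proof (Cmod_cross_ratio_le eta _ Heta Ha).
    apply Rplus_le_compat_r, Rmult_le_compat_l; [apply pow_le; lra| exact H].
Qed.

Lemma mobius_window_limit :
  forall eps, 0 < eps -> eventually_on_windows (fun p n => Cmod (G p n - wp) < eps).
Proof.
  intros eps Heps. pose proof root_ratio_lt_1 as Hlam.
  set (D := Cmod (wp - wm)). set (lam := Cmod wm / Cmod wp) in *.
  assert (HD : 0 < D) by (apply Cmod_gt_0, Cminus_eq_contra, wp_neq_wm).
  set (zt := Rmin (1 / 2) (eps / (2 * D + 1))).
  assert (Hzt : 0 < zt <= 1 / 2 /\ 2 * D * zt < eps).
  { assert (zt <= eps / (2 * D + 1)) by apply Rmin_r.
    split; [split; [apply Rmin_glb_lt; [lra| apply Rdiv_lt_0_compat; lra]| apply Rmin_l]|].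
    apply Rle_lt_trans with (2 * D * (eps / (2 * D + 1))); [apply Rmult_le_compat_l; lra|].
    apply Rmult_lt_reg_r with (2 * D + 1); [lra|].
    replace (2 * D * (eps / (2 * D + 1)) * (2 * D + 1)) with (2 * D * eps) by (field; lra).
    nra. }
  set (Z0 := 1 + D / eta).
  assert (HZ0 : 1 <= Z0) by (unfold Z0; pose proof (Rdiv_le_0_compat D eta); lra).
  destruct (pow_lt_1_zero lam ltac:(rewrite Rabs_right; lra) (zt / (2 * Z0)))
    as [N HN]; [apply Rdiv_lt_0_compat; lra|].
  assert (HlamN : lam ^ N * Z0 <= zt / 2).
  { specialize (HN N (le_n N)). rewrite Rabs_right in HN by (apply Rle_ge, pow_le; lra).
    apply (Rmult_lt_compat_r Z0) in HN; [|lra].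
    replace (zt / (2 * Z0) * Z0) with (zt / 2) in HN by (field; lra). lra. }
  set (K := 2 * D / (eta * eta)).
  assert (HK : 0 < K) by (apply Rdiv_lt_0_compat; nra).
  set (dm := Rmin (eta / 2) ((1 - lam) * zt / (2 * K))).
  assert (Hdm : 0 < dm <= eta / 2 /\ K * dm / (1 - lam) <= zt / 2).
  { assert (dm <= (1 - lam) * zt / (2 * K)) by apply Rmin_r.
    split; [split; [apply Rmin_glb_lt; [lra| apply Rdiv_lt_0_compat; nra]| apply Rmin_l]|].
    apply Rmult_le_reg_r with (1 - lam); [lra|].
    replace (K * dm / (1 - lam) * (1 - lam)) with (K * dm) by (field; lra).
    apply Rle_trans with (K * ((1 - lam) * zt / (2 * K))); [apply Rmult_le_compat_l; lra|].
    right. field. lra. }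
  intros L. destruct (cross_ratio_window_bound dm N (proj1 Hdm) L) as [P1 HP1].
  destruct (Haway L) as [P2 HP2].
  exists (Nat.max P1 P2). intros p n Hp Hn1 Hn2.
  specialize (HP1 p n ltac:(lia) Hn1 Hn2). fold D lam Z0 K in HP1.
  destruct (HP2 p n ltac:(lia) Hn1 Hn2) as [Hn _].
  eapply Rle_lt_trans; [apply dist_le_cross_ratio; [apply Cmod_sub_pos_neq; lra| lra]|].
  fold D. nra.
Qed.

End Orbit.

End Mobius.

(* [Phat_ratio n] is [Phat n / Phat (n - 1)] for [n >= 1] (Lemma [Phat_S]); its value 1 at
   [n = 0] is a placeholder, harmless because [Phat_b 0 = 0]. *)
Definition Phat_a (c d q : R) (x : C) (n : nat) : C := Cminus x (RtoC (q ^ n * (c - d))).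
Definition Phat_b (c d q : R) (n : nat) : R := q ^ (n - 1) * c * d * (1 - q ^ n).

Fixpoint Phat_ratio (c d q : R) (x : C) (n : nat) : C :=
  match n with
  | O => 1
  | S k => mobius (Phat_a c d q x k) (Phat_b c d q k) (Phat_ratio c d q x k)
  end.

Lemma Phat_ratio_S c d q x n :
  Phat_ratio c d q x (S n) = mobius (Phat_a c d q x n) (Phat_b c d q n) (Phat_ratio c d q x n).
Proof. reflexivity. Qed.

Lemma Phat_b_0 c d q : Phat_b c d q 0 = 0.
Proof. unfold Phat_b. simpl. ring. Qed.

Lemma Phat_0 c d q x : Phat c d q x 0 = 1.
Proof. reflexivity. Qed.

Lemma Phat_1 c d q x : Phat c d q x 1 = Phat_a c d q x 0.
Proof. unfold Phat, Phat_a. simpl. apply injective_projections; simpl; ring. Qed.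

Lemma Phat_SS c d q x n :
  Phat c d q x (S (S n)) =
  (Phat_a c d q x (S n) * Phat c d q x (S n) - Phat_b c d q (S n) * Phat c d q x n)%C.
Proof.
  unfold Phat, Phat_a, Phat_b. cbn [Phat_pair].
  destruct (Phat_pair c d q x n) as [pm pk]. reflexivity.
Qed.

Lemma Phat_S c d q x :
  (forall j, (1 <= j)%nat -> Phat_ratio c d q x j <> 0) ->
  forall n, Phat c d q x n <> 0 /\
            Phat c d q x (S n) = (Phat_ratio c d q x (S n) * Phat c d q x n)%C.
Proof.
  intros Hnz. induction n as [|n [IHnz IHeq]].
  - rewrite Phat_1, Phat_0. split; [intro E; injection E; lra|].
    rewrite Phat_ratio_S. unfold mobius.
    rewrite Phat_b_0.
    apply injective_projections; simpl; field.
  - assert (HR : Phat_ratio c d q x (S n) <> 0) by (apply Hnz; lia).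
    split; [rewrite IHeq; apply Cmult_neq_0; auto|].
    rewrite Phat_SS, IHeq, (Phat_ratio_S c d q x (S n)). unfold mobius. field. auto.
Qed.

Definition qroot (r : R) (p : nat) : R := Rpower r (/ INR p).

Lemma qroot_pos r p : 0 < qroot r p.
Proof. apply exp_pos. Qed.

Lemma qroot_le_1 r p : 0 < r < 1 -> (1 <= p)%nat -> qroot r p <= 1.
Proof.
  intros Hr Hp. unfold qroot, Rpower. rewrite <- exp_0. left. apply exp_increasing.
  pose proof (ln_neg r Hr). pose proof (INR_inv_pos p Hp). nra.
Qed.

Lemma qroot_unit_interval r p : 0 < r < 1 -> (1 <= p)%nat -> 0 <= qroot r p <= 1.
Proof. intros Hr Hp. pose proof (qroot_pos r p). pose proof (qroot_le_1 r p Hr Hp). lra. Qed.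

Lemma qroot_pow r p : 0 < r -> (1 <= p)%nat -> qroot r p ^ p = r.
Proof.
  intros Hr Hp. unfold qroot. rewrite <- Rpower_pow by apply exp_pos.
  rewrite Rpower_mult, Rinv_l by (apply not_0_INR; lia). apply Rpower_1; auto.
Qed.

Lemma one_sub_qroot_le r p : 0 < r -> (1 <= p)%nat -> 1 - qroot r p <= - ln r / INR p.
Proof.
  intros Hr Hp. unfold qroot, Rpower. pose proof (exp_ineq1_le (/ INR p * ln r)).
  unfold Rdiv. lra.
Qed.

Lemma qroot_pow_near r p n (L : nat) : 0 < r < 1 -> (1 <= p)%nat ->
  (p <= n + L)%nat -> (n <= p + L)%nat ->
  Rabs (qroot r p ^ n - r) <= INR L * (1 - qroot r p).
Proof.
  intros Hr Hp Hn1 Hn2.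
  pose proof (qroot_pos r p). pose proof (qroot_le_1 r p Hr Hp).
  pose proof (qroot_pow r p ltac:(lra) Hp) as Hqp. set (q := qroot r p) in *.
  rewrite <- Hqp.
  assert (Hq : 0 <= q <= 1) by lra.
  destruct (le_lt_dec p n) as [Hle|Hlt].
  - replace n with (p + (n - p))%nat by lia. rewrite pow_add.
    pose proof (one_sub_pow_le q (n - p) Hq). pose proof (pow_unit_interval q p Hq).
    pose proof (pow_unit_interval q (n - p) Hq).
    assert (INR (n - p) <= INR L) by (apply le_INR; lia).
    rewrite Rabs_left1 by nra. nra.
  - replace p with (n + (p - n))%nat by lia. rewrite pow_add.
    pose proof (one_sub_pow_le q (p - n) Hq). pose proof (pow_unit_interval q n Hq).
    pose proof (pow_unit_interval q (p - n) Hq).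
    assert (INR (p - n) <= INR L) by (apply le_INR; lia).
    rewrite Rabs_right by nra. nra.
Qed.

Lemma qroot_near_1 r : 0 < r < 1 -> forall eps, 0 < eps ->
  exists P, forall p, (P <= p)%nat -> (1 <= p)%nat /\ 1 - qroot r p <= eps.
Proof.
  intros Hr eps Heps. pose proof (ln_neg r Hr).
  destruct (archimed_cor1 (eps / - ln r)) as (N & HN & HN0); [apply Rdiv_lt_0_compat; lra|].
  exists N. intros p Hp. split; [lia|].
  eapply Rle_trans; [apply one_sub_qroot_le; lra || lia|].
  assert (HpN : / INR p <= / INR N)
    by (apply Rinv_le_contravar; [apply lt_0_INR| apply le_INR]; lia).
  apply Rmult_lt_compat_r with (r := - ln r) in HN; [|lra].
  replace (eps / - ln r * - ln r) with eps in HN by (field; lra).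
  unfold Rdiv. rewrite Rmult_comm. nra.
Qed.

Lemma qroot_pow_window r : 0 < r < 1 -> forall eps, 0 < eps ->
  eventually_on_windows (fun p n => Rabs (qroot r p ^ n - r) < eps).
Proof.
  intros Hr eps Heps L. pose proof (pos_INR L).
  destruct (qroot_near_1 r Hr (eps / (INR L + 1))) as [P HP]; [apply Rdiv_lt_0_compat; lra|].
  exists P. intros p n Hp Hn1 Hn2. destruct (HP p Hp) as [Hp1 Hq].
  eapply Rle_lt_trans; [apply qroot_pow_near; eauto|].
  apply Rle_lt_trans with (INR L * (eps / (INR L + 1))); [apply Rmult_le_compat_l; lra|].
  apply Rmult_lt_reg_r with (INR L + 1); [lra|].
  replace (INR L * (eps / (INR L + 1)) * (INR L + 1)) with (INR L * eps) by (field; lra). nra.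
Qed.

Lemma Phat_a_dist c d q r x n :
  Cmod (Phat_a c d q x n - Cminus x (RtoC (r * (c - d)))) = Rabs (q ^ n - r) * Rabs (c - d).
Proof.
  unfold Phat_a. rewrite Rabs_minus_sym, <- Rabs_mult, <- Cmod_R. f_equal.
  apply injective_projections; simpl; ring.
Qed.

Lemma Phat_b_dist c d q r n : 0 < c -> 0 < d -> 0 <= q <= 1 -> 0 < r < 1 ->
  Rabs (Phat_b c d q n - r * c * d * (1 - r)) <=
  c * d * (Rabs (q ^ (n - 1) - r) + Rabs (q ^ n - r)).
Proof.
  intros Hc Hd Hq Hr. unfold Phat_b.
  pose proof (pow_unit_interval q n Hq).
  set (u := q ^ (n - 1)). set (v := q ^ n) in *.
  replace (u * c * d * (1 - v) - r * c * d * (1 - r))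
    with (c * d * ((u - r) * (1 - v) + r * - (v - r))) by ring.
  rewrite Rabs_mult, (Rabs_right (c * d)) by nra.
  apply Rmult_le_compat_l; [nra|].
  eapply Rle_trans; [apply Rabs_triang|]. rewrite !Rabs_mult, Rabs_Ropp.
  rewrite (Rabs_right (1 - v)), (Rabs_right r) by lra.
  pose proof (Rabs_pos (u - r)). pose proof (Rabs_pos (v - r)). nra.
Qed.

Lemma Re_Phat_a c d q x n : Re (Phat_a c d q x n) = Re x - q ^ n * (c - d).
Proof. apply Re_sub_RtoC. Qed.

Lemma Im_Phat_a c d q x n : Im (Phat_a c d q x n) = Im x.
Proof. apply Im_sub_RtoC. Qed.

Lemma Phat_b_nonneg c d q n : 0 < c -> 0 < d -> 0 <= q <= 1 -> 0 <= Phat_b c d q n.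
Proof.
  intros Hc Hd Hq. unfold Phat_b.
  pose proof (pow_unit_interval q (n - 1) Hq). pose proof (pow_unit_interval q n Hq).
  apply Rmult_le_pos; [|lra]. repeat apply Rmult_le_pos; lra.
Qed.

Lemma Phat_ratio_Im_mul_ge c d q x n : 0 < c -> 0 < d -> 0 <= q <= 1 -> (1 <= n)%nat ->
  Im x ^ 2 <= Im x * Im (Phat_ratio c d q x n).
Proof.
  intros Hc Hd Hq.
  assert (Hstep : forall k, 0 <= Im x * Im (Phat_ratio c d q x k) ->
                  Im x ^ 2 <= Im x * Im (Phat_ratio c d q x (S k))).
  { intros k Hk. rewrite Phat_ratio_S, Im_mobius, Im_Phat_a.
    pose proof (Phat_b_nonneg c d q k Hc Hd Hq).
    set (g := Phat_ratio c d q x k) in *.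
    assert (0 <= Phat_b c d q k * (Im x * Im g) / (Re g ^ 2 + Im g ^ 2))
      by (apply Rdiv_nonneg; nra).
    replace (Im x * (Im x + Phat_b c d q k * Im g / (Re g ^ 2 + Im g ^ 2)))
      with (Im x ^ 2 + Phat_b c d q k * (Im x * Im g) / (Re g ^ 2 + Im g ^ 2))
      by (unfold Rdiv; ring).
    lra. }
  intros Hn. destruct n as [|n]; [lia|]. clear Hn.
  induction n as [|n IH]; apply Hstep; [unfold Im; simpl; lra|].
  pose proof (pow2_ge_0 (Im x)). lra.
Qed.

Section RealRight.
Variables (c d q : R) (x : C).
Hypotheses (Hc : 0 < c) (Hd : 0 < d) (Hq : 0 < q <= 1) (Hx : Im x = 0) (Hxc : c < Re x)
  (Hnear : (1 - q) * (4 * (c * d) + Rabs (c - d) * (Re x + d)) <= (Re x - c) ^ 2).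

Let a (n : nat) : R := Re x - q ^ n * (c - d).

Lemma real_a_bounds n : Re x - c <= a n <= Re x + d.
Proof. pose proof (pow_unit_interval q n ltac:(lra)). unfold a. nra. Qed.

Lemma real_a_succ_le n : a (S n) <= a n + Rabs (c - d) * (1 - q).
Proof.
  pose proof (pow_unit_interval q n ltac:(lra)). unfold a. simpl.
  pose proof (Rle_abs (c - d)). pose proof (Rabs_pos (c - d)).
  assert (q ^ n * (1 - q) * (c - d) <= q ^ n * (1 - q) * Rabs (c - d))
    by (apply Rmult_le_compat_l; nra).
  assert (q ^ n * ((1 - q) * Rabs (c - d)) <= 1 * ((1 - q) * Rabs (c - d)))
    by (apply Rmult_le_compat_r; nra).
  lra.
Qed.

(* The discriminant of the [n]-th step stays positive, with a margin absorbing the drift of [a]. *)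
Lemma real_margin n : (1 <= n)%nat ->
  Rabs (c - d) * (1 - q) * a n <= a n ^ 2 - 4 * Phat_b c d q n.
Proof.
  intros Hn. destruct n as [|k]; [lia|]. clear Hn.
  pose proof (real_a_bounds (S k)) as [Ha1 Ha2].
  pose proof (pow_unit_interval q k ltac:(lra)) as Hs.
  unfold Phat_b. simpl. replace (k - 0)%nat with k by lia. set (s := q ^ k) in *.
  assert (Ht : a (S k) = (Re x - c) + c * (1 - q * s) + d * (q * s)).
  { unfold a, s. simpl. ring. }
  assert (Hamgm : 4 * (c * d) * (q * s * (1 - q * s)) <= (c * (1 - q * s) + d * (q * s)) ^ 2)
    by (pose proof (pow2_ge_0 (c * (1 - q * s) - d * (q * s))); nra).
  assert (Hb : s * c * d * (1 - q * s) - c * d * (q * s * (1 - q * s)) <= c * d * (1 - q)).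
  { replace (s * c * d * (1 - q * s) - c * d * (q * s * (1 - q * s)))
      with (c * d * (1 - q) * (s * (1 - q * s))) by ring.
    assert (0 <= q * s <= 1) by (split; [apply Rmult_le_pos|]; nra).
    assert (0 <= s * (1 - q * s) <= 1) by (split; [apply Rmult_le_pos|]; nra).
    rewrite <- (Rmult_1_r (c * d * (1 - q))) at 2.
    apply Rmult_le_compat_l; [apply Rmult_le_pos; nra| lra]. }
  assert (Rabs (c - d) * (1 - q) * a (S k) <= Rabs (c - d) * (1 - q) * (Re x + d)).
  { apply Rmult_le_compat_l; [pose proof (Rabs_pos (c - d)); nra| lra]. }
  assert (0 <= (Re x - c) * (c * (1 - q * s) + d * (q * s))) by nra.
  rewrite Ht in *. nra.
Qed.

Lemma Phat_ratio_real_right n : (1 <= n)%nat ->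
  Im (Phat_ratio c d q x n) = 0 /\ a n / 2 <= Re (Phat_ratio c d q x n).
Proof.
  intros Hn. destruct n as [|n]; [lia|]. clear Hn.
  induction n as [|n [IHim IHre]].
  - rewrite Phat_ratio_S, Im_mobius, Re_mobius, Im_Phat_a, Re_Phat_a.
    rewrite Phat_b_0.
    split; [rewrite Hx; unfold Rdiv; ring|].
    pose proof (real_a_succ_le 0). pose proof (real_a_bounds 0).
    assert (Rabs (c - d) * (1 - q) <= Re x - c).
    { apply Rmult_le_reg_r with (Re x - c); [lra|].
      assert (0 <= Rabs (c - d) * (1 - q)) by (pose proof (Rabs_pos (c - d)); nra).
      assert (0 <= (1 - q) * (4 * (c * d))) by (apply Rmult_le_pos; nra).
      assert (Rabs (c - d) * (1 - q) * (Re x - c) <= Rabs (c - d) * (1 - q) * (Re x + d))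
        by (apply Rmult_le_compat_l; lra).
      nra. }
    unfold a in *. unfold Rdiv at 2. rewrite !Rmult_0_l. simpl in *. lra.
  - rewrite Phat_ratio_S, Im_mobius, Re_mobius, Im_Phat_a, Re_Phat_a, IHim.
    pose proof (real_a_bounds (S n)) as [Ha _].
    pose proof (real_a_succ_le (S n)) as Hdrift.
    pose proof (real_margin (S n) ltac:(lia)) as Hmargin.
    pose proof (Phat_b_nonneg c d q (S n) Hc Hd ltac:(lra)) as Hb.
    set (g := Re (Phat_ratio c d q x (S n))) in *.
    set (b := Phat_b c d q (S n)) in *. fold (a (S n)).
    split; [rewrite Hx; unfold Rdiv; ring|].
    replace (b * g / (g ^ 2 + 0 ^ 2)) with (b / g) by (field; lra).
    assert (b / g <= 2 * b / a (S n)).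
    { replace (2 * b / a (S n)) with (b / (a (S n) / 2)) by (field; lra).
      unfold Rdiv. apply Rmult_le_compat_l; [lra|]. apply Rinv_le_contravar; lra. }
    assert (2 * b / a (S n) <= a (S n) / 2 - Rabs (c - d) * (1 - q) / 2).
    { apply Rmult_le_reg_r with (2 * a (S n)); [lra|].
      replace (2 * b / a (S n) * (2 * a (S n))) with (4 * b) by (field; lra). nra. }
    lra.
Qed.

End RealRight.

Lemma Phat_ratio_reflect c d q x n : (1 <= n)%nat ->
  Phat_ratio d c q (- x) n = (- Phat_ratio c d q x n)%C.
Proof.
  intros Hn. destruct n as [|n]; [lia|]. clear Hn.
  assert (Ha : forall k, Phat_a d c q (- x) k = (- Phat_a c d q x k)%C).
  { intros k. unfold Phat_a. apply injective_projections; simpl; ring. }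
  assert (Hb : forall k, Phat_b d c q k = Phat_b c d q k).
  { intros k. unfold Phat_b. ring. }
  induction n as [|n IH];
    rewrite (Phat_ratio_S d c q (- x)), (Phat_ratio_S c d q x), Ha, Hb; unfold mobius.
  - rewrite Phat_b_0.
    apply injective_projections; simpl; field.
  - rewrite IH. destruct (Ceq_dec (Phat_ratio c d q x (S n)) 0) as [E|E].
    + rewrite E. apply injective_projections; simpl; unfold Rdiv; rewrite ?Rmult_0_l, ?Rinv_0; ring.
    + field. auto.
Qed.

Lemma rcd_pos c d r : 0 < c -> 0 < d -> 0 < r < 1 -> 0 < r * c * d * (1 - r).
Proof. intros Hc Hd Hr. apply Rmult_lt_0_compat; [|lra]. repeat apply Rmult_lt_0_compat; lra. Qed.

Section SmallRoot.
Variables (wp wm : C) (B : R).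
Hypotheses (HB : 0 < B) (Hprod : (wp * wm)%C = B) (Hmod : Cmod wm < Cmod wp).

Lemma small_root_sum :
  0 < Re wm ^ 2 + Im wm ^ 2 < B /\
  Re (wp + wm) = Re wm * (1 + B / (Re wm ^ 2 + Im wm ^ 2)) /\
  Im (wp + wm) = Im wm * (1 - B / (Re wm ^ 2 + Im wm ^ 2)).
Proof.
  assert (Hwm : wm <> 0).
  { intro E. rewrite E, Cmult_0_r in Hprod. injection Hprod. lra. }
  assert (Hwp : wp = (B / wm)%C) by (rewrite <- Hprod; field; auto).
  pose proof (Cmod_gt_0 wm) as [H _]. specialize (H Hwm).
  assert (HN : 0 < Re wm ^ 2 + Im wm ^ 2 < B).
  { rewrite <- Cmod2_alt. split; [nra|].
    rewrite Hwp, Cmod_div, Cmod_R, Rabs_right in Hmod by (auto; lra).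
    apply Rmult_lt_compat_r with (r := Cmod wm) in Hmod; [|lra].
    unfold Rdiv in Hmod. rewrite Rmult_assoc, Rinv_l in Hmod by lra. nra. }
  split; [exact HN|]. rewrite Hwp.
  destruct wm as [a b]. unfold Re, Im in *. cbn [fst snd] in HN.
  split; simpl; field; nra.
Qed.

Lemma small_root_Im : Im (wp + wm) * Im wm <= 0.
Proof.
  destruct small_root_sum as (HN & _ & ->).
  set (N := Re wm ^ 2 + Im wm ^ 2) in *.
  assert (B / N > 1).
  { apply Rmult_gt_reg_l with N; [lra|]. unfold Rdiv. rewrite <- Rmult_assoc, Rinv_r_simpl_m; lra. }
  pose proof (pow2_ge_0 (Im wm)). nra.
Qed.

Lemma small_root_real : Im (wp + wm) = 0 -> 0 < Re (wp + wm) ->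
  Im wm = 0 /\ Re wm < Re (wp + wm) / 2.
Proof.
  destruct small_root_sum as (HN & -> & ->).
  set (N := Re wm ^ 2 + Im wm ^ 2) in *.
  assert (HBN : B / N > 1).
  { apply Rmult_gt_reg_l with N; [lra|]. unfold Rdiv. rewrite <- Rmult_assoc, Rinv_r_simpl_m; lra. }
  intros Him Hre.
  assert (Hb : Im wm = 0) by (apply Rmult_integral in Him; destruct Him; [auto| lra]).
  split; [exact Hb|]. nra.
Qed.

End SmallRoot.

Lemma Phat_ratio_real_right_eventually c d r (x : C) :
  0 < c -> 0 < d -> 0 < r < 1 -> Im x = 0 -> c < Re x ->
  exists P, forall p n, (P <= p)%nat -> (1 <= n)%nat ->
    (1 <= p)%nat /\ Im (Phat_ratio c d (qroot r p) x n) = 0 /\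
    (Re x - qroot r p ^ n * (c - d)) / 2 <= Re (Phat_ratio c d (qroot r p) x n).
Proof.
  intros Hc Hd Hr Hx Hxc.
  set (K := 4 * (c * d) + Rabs (c - d) * (Re x + d)).
  assert (HK : 0 <= K) by (pose proof (Rabs_pos (c - d)); unfold K; nra).
  destruct (qroot_near_1 r Hr ((Re x - c) ^ 2 / (K + 1))) as [P HP].
  { apply Rdiv_lt_0_compat; nra. }
  exists P. intros p n Hp Hn. destruct (HP p Hp) as [Hp1 Hq]. split; [exact Hp1|].
  pose proof (qroot_pos r p). pose proof (qroot_le_1 r p Hr Hp1).
  refine (Phat_ratio_real_right c d (qroot r p) x Hc Hd ltac:(lra) Hx Hxc _ n Hn).
  fold K. eapply Rle_trans; [apply Rmult_le_compat_r; [lra| exact Hq]|].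
  apply Rdiv_plus_1_mul_le; [apply pow2_ge_0| exact HK].
Qed.

Lemma ratio_bounds_real_right c d r (x wp wm : C) :
  0 < c -> 0 < d -> 0 < r < 1 -> Im x = 0 -> c < Re x ->
  (wp + wm)%C = Cminus x (RtoC (r * (c - d))) -> (wp * wm)%C = RtoC (r * c * d * (1 - r)) ->
  Cmod wm < Cmod wp ->
  exists eta mu, 0 < eta /\ 0 < mu /\
    (exists P, forall p n, (P <= p)%nat -> (1 <= n)%nat ->
       mu <= Cmod (Phat_ratio c d (qroot r p) x n)) /\
    eventually_on_windows (fun p n => eta <= Cmod (Phat_ratio c d (qroot r p) x n - wm)).
Proof.
  intros Hc Hd Hr Hx Hxc HS HP HM.
  destruct (Phat_ratio_real_right_eventually c d r x Hc Hd Hr Hx Hxc) as [P0 Hreal].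
  destruct (small_root_real wp wm _ (rcd_pos c d r Hc Hd Hr) HP HM) as [_ Hgap].
  { rewrite HS, Im_sub_RtoC. exact Hx. }
  { rewrite HS, Re_sub_RtoC. nra. }
  rewrite HS, Re_sub_RtoC in Hgap. set (gap := (Re x - r * (c - d)) / 2 - Re wm).
  assert (Hgap0 : 0 < gap) by (unfold gap; lra).
  exists (gap / 2), ((Re x - c) / 2). split; [lra|]. split; [lra|]. split.
  - exists P0. intros p n Hp Hn. destruct (Hreal p n Hp Hn) as (Hp1 & _ & Hre).
    pose proof (pow_unit_interval (qroot r p) n (qroot_unit_interval r p Hr Hp1)).
    assert (qroot r p ^ n * (c - d) <= c) by nra.
    eapply Rle_trans; [|apply re_le_Cmod]. eapply Rle_trans; [|apply Rle_abs]. lra.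
  - intros L. pose proof (Rabs_pos (c - d)) as HE.
    destruct (qroot_pow_window r Hr (gap / (Rabs (c - d) + 1))
                ltac:(apply Rdiv_lt_0_compat; lra) L) as [P1 HP1].
    exists (Nat.max (Nat.max P0 P1) (S L)). intros p n Hp Hn1 Hn2.
    destruct (Hreal p n ltac:(lia) ltac:(lia)) as (_ & _ & Hre).
    specialize (HP1 p n ltac:(lia) Hn1 Hn2).
    assert (Hdrift : (qroot r p ^ n - r) * (c - d) <= gap).
    { eapply Rle_trans; [apply Rle_abs|]. rewrite Rabs_mult.
      eapply Rle_trans; [apply Rmult_le_compat_r; [exact HE| left; exact HP1]|].
      apply Rdiv_plus_1_mul_le; lra. }
    assert (HreR : Re (Phat_ratio c d (qroot r p) x n - wm)
                   = Re (Phat_ratio c d (qroot r p) x n) - Re wm) by (unfold Re; simpl; ring).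
    eapply Rle_trans; [|apply re_le_Cmod]. eapply Rle_trans; [|apply Rle_abs].
    rewrite HreR. unfold gap in *. lra.
Qed.

Section RatioLimit.
Variables (c d r : R) (x wp wm : C).
Hypotheses (Hc : 0 < c) (Hd : 0 < d) (Hr : 0 < r < 1)
  (Hx : ~ (Im x = 0 /\ - d <= Re x <= c))
  (Hsum : (wp + wm)%C = Cminus x (RtoC (r * (c - d))))
  (Hprod : (wp * wm)%C = RtoC (r * c * d * (1 - r)))
  (Hmod : Cmod wm < Cmod wp).

Local Notation Pq p n := (Phat c d (qroot r p) x n).
Local Notation Rq p n := (Phat_ratio c d (qroot r p) x n).

Lemma ratio_bounds_complex : Im x <> 0 ->
  forall p n, (1 <= p)%nat -> (1 <= n)%nat ->
  Rabs (Im x) <= Cmod (Rq p n) /\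
  Rabs (Im x) <= Cmod (Rq p n - wm).
Proof.
  intros Him p n Hp Hn.
  pose proof (Phat_ratio_Im_mul_ge c d (qroot r p) x n Hc Hd
                (qroot_unit_interval r p Hr Hp) Hn) as HIm.
  pose proof (small_root_Im wp wm _ (rcd_pos c d r Hc Hd Hr) Hprod Hmod) as Hwm.
  rewrite Hsum, Im_sub_RtoC in Hwm.
  set (g := Rq p n) in *.
  split.
  - eapply Rle_trans; [apply Rabs_le_of_sqr_le_mul; exact HIm| apply Im_le_Cmod].
  - eapply Rle_trans; [|apply Im_le_Cmod]. apply Rabs_le_of_sqr_le_mul.
    replace (Im (g - wm)) with (Im g - Im wm) by (unfold Im; simpl; ring). nra.
Qed.

Lemma ratio_bounds : exists eta mu, 0 < eta /\ 0 < mu /\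
    (exists P, forall p n, (P <= p)%nat -> (1 <= n)%nat ->
       mu <= Cmod (Rq p n)) /\
    eventually_on_windows (fun p n => eta <= Cmod (Rq p n - wm)).
Proof.
  destruct (Req_dec (Im x) 0) as [Him|Him].
  - destruct (Rlt_or_le c (Re x)) as [Hright|Hle].
    + exact (ratio_bounds_real_right c d r x wp wm Hc Hd Hr Him Hright Hsum Hprod Hmod).
    + assert (Hleft : Re x < - d) by (destruct (Rlt_or_le (Re x) (- d)); [auto| tauto]).
      destruct (ratio_bounds_real_right d c r (- x) (- wp) (- wm) Hd Hc Hr)
        as (eta & mu & Heta & Hmu & [P HPmu] & Hwin).
      * unfold Im in *. simpl. lra.
      * unfold Re in *. simpl. lra.
      * replace (- wp + - wm)%C with (- (wp + wm))%C by ring. rewrite Hsum.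
        apply injective_projections; simpl; ring.
      * replace (- wp * - wm)%C with (wp * wm)%C by ring. rewrite Hprod. f_equal. ring.
      * rewrite !Cmod_opp. exact Hmod.
      * exists eta, mu. split; [exact Heta|]. split; [exact Hmu|]. split.
        -- exists P. intros p n Hp Hn. specialize (HPmu p n Hp Hn).
           rewrite Phat_ratio_reflect, Cmod_opp in HPmu by exact Hn. exact HPmu.
        -- intros L. destruct (Hwin L) as [P' HP']. exists (Nat.max P' (S L)).
           intros p n Hp Hn1 Hn2. specialize (HP' p n ltac:(lia) Hn1 Hn2).
           rewrite Phat_ratio_reflect in HP' by lia.
           replace (- Rq p n - - wm)%C
             with (- (Rq p n - wm))%C in HP' by ring.
           rewrite Cmod_opp in HP'. exact HP'.
  - exists (Rabs (Im x)), (Rabs (Im x)).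
    pose proof (Rabs_pos_lt _ Him). split; [lra|]. split; [lra|]. split.
    + exists 1%nat. intros p n Hp Hn. apply ratio_bounds_complex; auto.
    + intros L. exists (S L). intros p n Hp Hn1 Hn2. apply ratio_bounds_complex; auto; lia.
Qed.

Lemma ratio_window_limit : forall eps, 0 < eps ->
  eventually_on_windows (fun p n => Cmod (Rq p n - wp) < eps).
Proof.
  destruct ratio_bounds as (eta & mu & Heta & Hmu & [P0 HP0] & Hwin).
  apply (mobius_window_limit _ _ wp wm Hsum Hprod Hmod _ eta Heta).
  - intros L. destruct (Hwin L) as [P1 HP1]. exists (Nat.max (Nat.max P0 P1) (S L)).
    intros p n Hp Hn1 Hn2. split; [apply HP1; lia|].
    apply Cmod_pos_neq0. specialize (HP0 p n ltac:(lia) ltac:(lia)). lra.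
  - intros e He L. pose proof (Rabs_pos (c - d)) as HE. set (E := Rabs (c - d)) in *.
    assert (Hcd : 0 < c * d) by nra.
    set (K := E + 2 * (c * d) / mu + 1).
    assert (HK : 1 <= K) by (pose proof (Rdiv_lt_0_compat (2 * (c * d)) mu); unfold K; lra).
    destruct (qroot_pow_window r Hr (e / K) ltac:(apply Rdiv_lt_0_compat; lra) (S L))
      as [P1 HP1].
    exists (Nat.max (Nat.max P0 P1) (S (S L))). intros p n Hp Hn1 Hn2.
    pose proof (HP1 p n ltac:(lia) ltac:(lia) ltac:(lia)) as Hq1.
    pose proof (HP1 p (n - 1)%nat ltac:(lia) ltac:(lia) ltac:(lia)) as Hq0.
    specialize (HP0 p n ltac:(lia) ltac:(lia)).
    rewrite Phat_ratio_S. set (g := Rq p n) in *.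
    eapply Rle_lt_trans; [apply mobius_perturb, Cmod_pos_neq0; lra|].
    rewrite Phat_a_dist, <- RtoC_minus, Cmod_R. fold E.
    pose proof (Phat_b_dist c d (qroot r p) r n Hc Hd (qroot_unit_interval r p Hr ltac:(lia)) Hr).
    assert (HeK : 0 < e / K) by (apply Rdiv_lt_0_compat; lra).
    apply Rle_lt_trans with (e / K * E + c * d * (e / K + e / K) / mu).
    + apply Rplus_le_compat; [apply Rmult_le_compat_r; lra|].
      apply Rle_trans with (c * d * (e / K + e / K) / Cmod g).
      * unfold Rdiv at 1 3. apply Rmult_le_compat_r; [apply Rlt_le, Rinv_0_lt_compat; lra|].
        eapply Rle_trans; [eassumption|]. apply Rmult_le_compat_l; lra.
      * unfold Rdiv. apply Rmult_le_compat_l; [apply Rmult_le_pos; lra|].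
        apply Rinv_le_contravar; lra.
    + replace (e / K * E + c * d * (e / K + e / K) / mu) with (e / K * (K - 1))
        by (unfold K, Rdiv; ring).
      replace (e / K * (K - 1)) with (e - e / K) by (field; lra). lra.
Qed.

Lemma Phat_S_eventually : exists P, forall p n, (P <= p)%nat ->
  Pq p n <> 0 /\
  Pq p (S n) =
  (Rq p (S n) * Pq p n)%C.
Proof.
  destruct ratio_bounds as (eta & mu & _ & Hmu & [P HP] & _).
  exists P. intros p n Hp. apply Phat_S. intros j Hj.
  apply Cmod_pos_neq0. specialize (HP p j Hp Hj). lra.
Qed.

Lemma ratio_offset_limit (k : nat) (f : nat -> nat) :
  (forall p, (p <= f p + k)%nat /\ (f p <= p + k)%nat) ->
  filterlim (fun p => Rq p (f p)) eventually (Clocally wp).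
Proof.
  intros Hf. apply filterlim_Clocally_Cmod. intros eps Heps.
  destruct (ratio_window_limit eps Heps k) as [P HP].
  exists P. intros p Hp. destruct (Hf p). apply HP; auto.
Qed.

Lemma Phat_ratio_up (k : nat) :
  filterlim (fun p => (Pq p (p + k) / Pq p p)%C) eventually (Clocally (wp ^ k)%C).
Proof.
  destruct Phat_S_eventually as [P HP].
  induction k as [|k IH].
  - apply (filterlim_seq_ext_loc (fun _ => RtoC 1)); [|apply filterlim_seq_const].
    exists P. intros p Hp. rewrite Nat.add_0_r. destruct (HP p p Hp) as [Hnz _]. field. auto.
  - apply (filterlim_seq_ext_loc (fun p => (Rq p (S (p + k)) * (Pq p (p + k) / Pq p p))%C)).
    + exists P. intros p Hp. rewrite Nat.add_succ_r.
      destruct (HP p (p + k)%nat Hp) as [_ ->]. destruct (HP p p Hp) as [Hnz _]. field. auto.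
    + apply filterlim_Cmult; [|exact IH]. apply (ratio_offset_limit (S k)). intros; lia.
Qed.

Lemma Phat_ratio_down (k : nat) :
  filterlim (fun p => (Pq p (p - k) / Pq p p)%C) eventually (Clocally (/ wp ^ k)%C).
Proof.
  destruct Phat_S_eventually as [P HP]. pose proof (wp_neq0 wp wm Hmod) as Hwp.
  induction k as [|k IH].
  - apply (filterlim_seq_ext_loc (fun _ => RtoC 1)).
    + exists P. intros p Hp. rewrite Nat.sub_0_r. destruct (HP p p Hp) as [Hnz _]. field. auto.
    + replace (/ wp ^ 0)%C with (RtoC 1) by (simpl; field). apply filterlim_seq_const.
  - apply (filterlim_seq_ext_loc (fun p => (Pq p (p - k) / Pq p p * / Rq p (p - k))%C)).
    + exists (Nat.max P (S k)). intros p Hp.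
      destruct (HP p (p - S k)%nat ltac:(lia)) as [Hnz1 Hrec].
      replace (S (p - S k)) with (p - k)%nat in Hrec by lia.
      destruct (HP p p ltac:(lia)) as [Hnz _].
      assert (Rq p (p - k) <> 0).
      { intro E. rewrite E, Cmult_0_l in Hrec. destruct (HP p (p - k)%nat ltac:(lia)). auto. }
      rewrite Hrec. field. auto.
    + replace (/ wp ^ S k)%C with (/ wp ^ k * / wp)%C
        by (pose proof (Cpow_nz wp k Hwp); simpl; field; auto).
      apply filterlim_Cmult; [exact IH|].
      eapply filterlim_comp; [apply (ratio_offset_limit k); intros; lia|].
      apply continuous_Cinv, Hwp.
Qed.

Lemma Phat_shift_limit (m : Z) :
  filterlim (fun p => Cdiv (Phat_shift c d (qroot r p) x p m) (Pq p p))
    eventually (locally (Cpowz wp m)).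
Proof.
  apply filterlim_Clocally_locally. unfold Phat_shift.
  destruct m as [|k|k]; simpl Cpowz.
  - apply (filterlim_seq_ext_loc (fun p => (Pq p (p + 0) / Pq p p)%C)).
    + exists O. intros p _. do 3 f_equal. lia.
    + exact (Phat_ratio_up 0).
  - apply (filterlim_seq_ext_loc (fun p => (Pq p (p + Pos.to_nat k) / Pq p p)%C)).
    + exists O. intros p _. do 3 f_equal. lia.
    + apply Phat_ratio_up.
  - apply (filterlim_seq_ext_loc (fun p => (Pq p (p - Pos.to_nat k) / Pq p p)%C)).
    + exists O. intros p _. do 3 f_equal. lia.
    + apply Phat_ratio_down.
Qed.

End RatioLimit.

(* [y +- s] are the roots of [w^2 - 2 y w + 1]; scaling by [sqrt B] turns them into the
   roots of [w^2 - A w + B]. *)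
Lemma scaled_roots (A y s : C) (B : R) : 0 < B -> y = (A / RtoC (2 * sqrt B))%C ->
  (s * s)%C = (y * y - 1)%C -> 1 < Cmod (y + s) ->
  (sqrt B * (y + s) + sqrt B * (y - s))%C = A /\
  (sqrt B * (y + s) * (sqrt B * (y - s)))%C = B /\
  Cmod (sqrt B * (y - s)) < Cmod (sqrt B * (y + s)).
Proof.
  intros HB Hy Hs Hys.
  assert (Hsq : 0 < sqrt B) by (apply sqrt_lt_R0; lra).
  assert (Hsq0 : RtoC (sqrt B) <> 0) by (intro E; injection E; lra).
  assert (Hprod1 : ((y + s) * (y - s))%C = 1).
  { replace ((y + s) * (y - s))%C with (y * y - s * s)%C by ring. rewrite Hs. ring. }
  split; [|split].
  - rewrite Hy, RtoC_mult. field.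
    repeat split; (assumption || (intro E; injection E; lra)).
  - replace (sqrt B * (y + s) * (sqrt B * (y - s)))%C
      with (RtoC (sqrt B * sqrt B) * ((y + s) * (y - s)))%C by (rewrite RtoC_mult; ring).
    rewrite Hprod1, sqrt_sqrt by lra. ring.
  - rewrite !Cmod_mult, Cmod_R, Rabs_right by lra.
    apply Rmult_lt_compat_l; [lra|].
    apply (f_equal Cmod) in Hprod1. rewrite Cmod_mult, Cmod_1 in Hprod1.
    pose proof (Cmod_ge_0 (y - s)). nra.
Qed.

Theorem mainTheorem8 (c d r : R) (m : Z) (x : C)
  (hc : 0 < c) (hd : 0 < d) (hr0 : 0 < r) (hr1 : r < 1)
  (hx : ~ (Im x = 0 /\ - d <= Re x <= c)) :
  let y : C := Cdiv (Cminus x (RtoC (r * (c - d))))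
                    (RtoC (2 * sqrt (r * c * d * (1 - r)))) in
  forall s : C,
    Cmult s s = Cminus (Cmult y y) (RtoC 1) ->
    1 < Cmod (Cplus y s) ->
    filterlim
      (fun p : nat =>
         Cdiv (Phat_shift c d (Rpower r (/ INR p)) x p m)
              (Phat c d (Rpower r (/ INR p)) x p))
      eventually
      (locally (Cmult (Cpowz (RtoC (sqrt (c * d * r * (1 - r)))) m)
                      (Cpowz (Cplus y s) m))).
Proof.
  intros y s Hs Hys.
  pose proof (rcd_pos c d r hc hd (conj hr0 hr1)) as HB.
  destruct (scaled_roots _ y s _ HB eq_refl Hs Hys) as (Hsum & Hprod & Hmod).
  replace (c * d * r * (1 - r)) with (r * c * d * (1 - r)) by ring.
  rewrite Cpowz_mult.
  - exact (Phat_shift_limit c d r x _ _ hc hd (conj hr0 hr1) hx Hsum Hprod Hmod m).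
  - intro E. injection E. pose proof (sqrt_lt_R0 _ HB). lra.
  - intro E. rewrite E, Cmod_0 in Hys. lra.
Qed.
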